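(* Let $X$ be a set and $f=(f_1,\ldots,f_m):X\to\mathbb{R}^m$ a mapping, $M=\{1,\ldots,m\}$. If the free disposal hull $f(X)+\mathbb{R}^m_{\geq0}$ is convex, then the following are equivalent: $(\alpha)$ $\mathrm{WE}(f,X)=\mathrm{E}(f,X)$; $(\beta)$ $\displaystyle\bigcup_{\emptyset\neq I\subseteq M}\mathrm{E}(f_I,X)\subseteq\mathrm{E}(f,X)$.
   Context: Let $M=\{1,\ldots,m\}$. For a nonempty $I\subseteq M$ and $y,y'\in\mathbb{R}^m$: $y\lneq_I y'$ means $y_i\leq y'_i$ for all $i\in I$ and $y_j<y'_j$ for some $j\in I$; $y<_I y'$ means $y_i<y'_i$ for all $i\in I$. For $Y\subseteq\mathbb{R}^m$, $\mathrm{M}_I Y$ (resp. $\mathrm{WM}_I Y$) is the set of all $y'\in Y$ for which there is no $y\in Y$ with $y\lneq_I y'$ (resp. $y<_I y'$). For $f=(f_1,\ldots,f_m):X\to\mathbb{R}^m$ and $I=\{i_1<\cdots<i_k\}$, $f_I=(f_{i_1},\ldots,f_{i_k})$, and $\mathrm{E}(f_I,X)=f^{-1}(\mathrm{M}_I f(X))$ (efficient solutions), $\mathrm{WE}(f_I,X)=f^{-1}(\mathrm{WM}_I f(X))$ (weakly efficient solutions); $\mathrm{E}(f,X)=\mathrm{E}(f_M,X)$, $\mathrm{WE}(f,X)=\mathrm{WE}(f_M,X)$. $\mathbb{R}^m_{\geq0}$ is the nonnegative orthant, and the free disposal hull of $Z\subseteq\mathbb{R}^m$ is $Z+\mathbb{R}^m_{\geq0}$.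 *)

From Stdlib Require Import Reals.
Open Scope R_scope.

(* A point of R^m is represented by a function nat -> R; only the
   coordinates i < m are relevant.  Subsets are predicates. *)
Definition vec := nat -> R.

(* The index set M = {1,...,m}, represented as {0,...,m-1}. *)
Definition Mset (m : nat) : nat -> Prop := fun i => (i < m)%nat.

Definition lneqI (I : nat -> Prop) (y y' : vec) : Prop :=
  (forall i, I i -> y i <= y' i) /\ (exists j, I j /\ y j < y' j).

Definition ltI (I : nat -> Prop) (y y' : vec) : Prop :=
  forall i, I i -> y i < y' i.

Definition MinI (I : nat -> Prop) (Y : vec -> Prop) : vec -> Prop :=
  fun y' => Y y' /\ ~ (exists y, Y y /\ lneqI I y y').
Definition WMinI (I : nat -> Prop) (Y : vec -> Prop) : vec -> Prop :=
  fun y' => Y y' /\ ~ (exists y, Y y /\ ltI I y y').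

Definition image {X : Type} (f : X -> vec) : vec -> Prop :=
  fun y => exists x, y = f x.

Definition Eff {X : Type} (f : X -> vec) (I : nat -> Prop) : X -> Prop :=
  fun x => MinI I (image f) (f x).
Definition WEff {X : Type} (f : X -> vec) (I : nat -> Prop) : X -> Prop :=
  fun x => WMinI I (image f) (f x).

Definition fdh (m : nat) (Z : vec -> Prop) : vec -> Prop :=
  fun z => exists w d, Z w /\ (forall i, (i < m)%nat -> 0 <= d i) /\
             (forall i, (i < m)%nat -> z i = w i + d i).

Definition convex_in (m : nat) (S : vec -> Prop) : Prop :=
  forall a b t, S a -> S b -> 0 <= t <= 1 ->
    exists c, S c /\ (forall i, (i < m)%nat -> c i = t * a i + (1 - t) * b i).

(** If [x] is weakly efficient for an index family [I] but not efficient, some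
    [y] in [f(X)] is [<= f x] on [I] and strictly below it at some [j]. Then [x]
    stays weakly efficient for [I \ {j}]: otherwise a [z] strictly below [f x]
    on [I \ {j}], mixed with [y] with enough weight on [y], gives a point of
    the convex set [f(X) + R^m_{>=0}] strictly below [f x] on all of [I], and
    the point of [f(X)] under it contradicts weak efficiency for [I]. By
    induction, every weakly efficient solution is efficient for some nonempty
    subfamily, which gives (beta) => (alpha); the converse holds because
    [E(f_I, X)] is always contained in [WE(f, X)]. *)
From Stdlib Require Import Reals Lra List Lia Classical Wf_nat.
Open Scope R_scope.

Lemma exists_mix_lt (a b c : R) : a < c ->
  exists t, 0 < t < 1 /\ t * a + (1 - t) * b < c.
Proof.
  intros Hac.
  set (d := c - a); set (e := Rabs (b - c)).
  assert (Hd : 0 < d) by (unfold d; lra).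
  assert (He : 0 <= e) by apply Rabs_pos.
  assert (Hbe : b - c <= e) by apply Rle_abs.
  (* with this [t], the combination lies exactly [d / 2] below [c] when [b = c + e] *)
  exists ((2 * e + d) / (2 * e + 2 * d)).
  set (t := (2 * e + d) / (2 * e + 2 * d)).
  assert (Ht : t * (2 * e + 2 * d) = 2 * e + d) by (unfold t; field; lra).
  assert (Ht01 : 0 < t < 1) by (split; nra).
  split; [exact Ht01|].
  assert (Hmix : t * a + (1 - t) * b - c = - t * d + (1 - t) * (b - c))
    by (unfold d; ring).
  assert ((1 - t) * (b - c) <= (1 - t) * e) by (apply Rmult_le_compat_l; lra).
  nra.
Qed.

Lemma sub_fdh (m : nat) {Z : vec -> Prop} {z : vec} : Z z -> fdh m Z z.
Proof. intros Hz; exists z, (fun _ => 0); split; [exact Hz | split; intros; lra]. Qed.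

Section Efficiency.

Context {X : Type} {f : X -> vec}.

Lemma WEff_mono {I J : nat -> Prop} {x : X} :
  (forall i, I i -> J i) -> WEff f I x -> WEff f J x.
Proof.
  intros HIJ [Hx Hw]; split; [exact Hx|].
  intros [y [Hy Hlt]]; apply Hw; exists y; split; [exact Hy|].
  intros i Hi; apply Hlt, HIJ, Hi.
Qed.

Lemma Eff_WEff {I : nat -> Prop} {x : X} :
  (exists i, I i) -> Eff f I x -> WEff f I x.
Proof.
  intros [i0 Hi0] [Hx HE]; split; [exact Hx|].
  intros [y [Hy Hlt]]; apply HE; exists y; split; [exact Hy|].
  split; [intros i Hi; left; apply Hlt, Hi | exists i0; split; [exact Hi0 | apply Hlt, Hi0]].
Qed.

(* For the empty family [f x] itself violates weak efficiency. *)
Lemma WEff_exists_index {I : nat -> Prop} {x : X} :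
  WEff f I x -> exists i, I i.
Proof.
  intros [_ Hw]; apply NNPP; intros Hnone.
  apply Hw; exists (f x); split; [exists x; reflexivity|].
  intros i Hi; exfalso; apply Hnone; exists i; exact Hi.
Qed.

Context {m : nat}.
Hypothesis fdh_convex : convex_in m (fdh m (image f)).

Lemma mix_strictly_below {I : nat -> Prop} (j : nat) (x : X) {y z : vec} :
  (forall i, I i -> (i < m)%nat) -> image f y -> image f z ->
  (forall i, I i -> y i <= f x i) -> y j < f x j ->
  (forall i, I i -> i <> j -> z i < f x i) ->
  exists w, image f w /\ ltI I w (f x).
Proof.
  intros HIm Hy Hz Hyle Hyj Hzlt.
  destruct (exists_mix_lt (y j) (z j) (f x j) Hyj) as [t [Ht Htj]].
  destruct (fdh_convex y z t (sub_fdh m Hy) (sub_fdh m Hz) ltac:(lra))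
    as [c [[w [d [Hw [Hd Hcwd]]]] Hc]].
  exists w; split; [exact Hw|].
  intros i Hi.
  pose proof (HIm i Hi) as Him.
  pose proof (Hc i Him) as Hci; rewrite (Hcwd i Him) in Hci; pose proof (Hd i Him).
  destruct (Nat.eq_dec i j) as [->|Hij]; [lra|].
  pose proof (Hyle i Hi); pose proof (Hzlt i Hi Hij); nra.
Qed.

Lemma WEff_remove_index {l : list nat} {x : X} :
  (forall i, In i l -> (i < m)%nat) ->
  WEff f (fun i => In i l) x -> ~ Eff f (fun i => In i l) x ->
  exists j, In j l /\ WEff f (fun i => In i (remove Nat.eq_dec j l)) x.
Proof.
  intros Hlm [Hx Hw] HnE.
  assert (Hdom : exists y, image f y /\ lneqI (fun i => In i l) y (f x)).
  { apply NNPP; intros Hn; apply HnE; split; [exact Hx | exact Hn]. }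
  destruct Hdom as [y [Hy [Hyle [j [Hj Hyj]]]]].
  exists j; split; [exact Hj|].
  apply NNPP; intros HnW.
  assert (Hz : exists z, image f z /\ ltI (fun i => In i (remove Nat.eq_dec j l)) z (f x)).
  { apply NNPP; intros Hn; apply HnW; split; [exact Hx | exact Hn]. }
  destruct Hz as [z [Hz Hzlt]].
  apply Hw, (mix_strictly_below j x Hlm Hy Hz Hyle Hyj).
  intros i Hi Hij; apply Hzlt, in_in_remove; assumption.
Qed.

Lemma WEff_Eff_subfamily (l : list nat) {x : X} :
  (forall i, In i l -> (i < m)%nat) -> WEff f (fun i => In i l) x ->
  exists I, (forall i, I i -> In i l) /\ (exists i, I i) /\ Eff f I x.
Proof.
  induction l as [l IH] using (induction_ltof1 _ (@length nat)).
  intros Hlm Hw.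
  destruct (classic (Eff f (fun i => In i l) x)) as [HE|HnE].
  { exists (fun i => In i l); split; [tauto | split; [exact (WEff_exists_index Hw) | exact HE]]. }
  destruct (WEff_remove_index Hlm Hw HnE) as [j [Hj Hw']].
  destruct (IH (remove Nat.eq_dec j l)) as [I [HIl HI]].
  - apply remove_length_lt, Hj.
  - intros i Hi; apply Hlm, (in_remove _ _ _ _ Hi).
  - exact Hw'.
  - exists I; split; [|exact HI].
    intros i Hi; exact (proj1 (in_remove _ _ _ _ (HIl i Hi))).
Qed.

End Efficiency.

Theorem proposition2p3 (X : Type) (m : nat) (f : X -> vec) :
  (1 <= m)%nat ->
  convex_in m (fdh m (image f)) ->
  ((forall x, WEff f (Mset m) x <-> Eff f (Mset m) x) <->
   (forall (I : nat -> Prop),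
      (forall i, I i -> (i < m)%nat) -> (exists i, I i) ->
      forall x, Eff f I x -> Eff f (Mset m) x)).
Proof.
  intros Hm Hc; split.
  - intros HWE I HIm HI x HE.
    apply HWE, (WEff_mono HIm), (Eff_WEff HI HE).
  - intros Hsub x; split.
    + intros Hw.
      assert (Hseq : forall i, In i (seq 0 m) <-> (i < m)%nat)
        by (intros i; rewrite in_seq; lia).
      destruct (WEff_Eff_subfamily Hc (seq 0 m) (fun i => proj1 (Hseq i))
                  (WEff_mono (fun i => proj2 (Hseq i)) Hw)) as [I [HIl [HI HE]]].
      apply (Hsub I); [intros i Hi; apply Hseq, HIl, Hi | exact HI | exact HE].
    + apply Eff_WEff; exists 0%nat; exact Hm.
Qed.
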